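(* Let $\mathbf{s}(\lambda)$ and $\mathbf{v}(i)$ be $N$-vectors with entries $s_j(\lambda) = S(e_j, e_j; \lambda)$ and $v_j(i) = \delta_{ij}$, and let $\bar{\mathbf{s}}(\lambda) = (\mathbf{s}(\lambda), \mathbf{s}(\lambda))$ and $\bar{\mathbf{v}}(i) = (\mathbf{v}(i), \mathbf{v}(i))$ be the corresponding $2N$-vectors. Then \[ G_i(\lambda, z) = S(e_i, e_i; \lambda) + \sum_{d = 1}^{\infty} \bar{\mathbf{v}}^{T}(i)\, \mathbf{K}(\lambda, z)^d\, \bar{\mathbf{s}}(\lambda). \]
   Context: Fix $N \geq 3$. Let $\mathcal{G}_N$ be the groupoid with objects $\{1,\dots,N\}$, generated by arrows $A_{i,j}^{(k)}$ ($i \neq j$, $k \in \{-1,1\}$) with source $i$ and target $j$, subject to the relations $A_{i,j}^{(k)} A_{j,\ell}^{(k)} = A_{i,\ell}^{(k)}$ (with $A_{i,i}^{(k)} := e_i$, the unit at $i$). Every arrow has a unique reduced representation, either empty or an alternating product $A_{i_1,i_2}^{(k)} A_{i_2,i_3}^{(-k)} \cdots$ with consecutive indices distinct. A metric $|\cdot|_{\mathcal{M}}$ generated by the generators assigns a nonnegative value to each generator and is additive over the reduced representation, with $|e_i|_{\mathcal{M}} = 0$. Let $(W_n)_{n \ge 0}$ be a Markov chain on the arrows with $P(W_{n+1} = y \mid W_n = x) = p_{i,j}^{(k)}$ if $x^{-1}y = A_{i,j}^{(k)}$ ($i \neq j$) and $0$ otherwise, where all $p_{i,j}^{(k)} \in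 (0,1)$ and $\sum_{j,k} p_{i,j}^{(k)} = 1$ for each $i$. Write $P_x, E_x$ for the chain started at $W_0 = x$. For arrows $x, y$ define $S(x, y; \lambda) = \sum_{n\ge 0} P_x(W_n = y)\lambda^n$, let $T(0,y) = \inf\{k \ge 0 : W_k = W_0 y\}$, and let $R_{i,j}^{(k)}(\lambda) = E_{e_i}[\lambda^{T(0, A_{i,j}^{(k)})}]$. Define $G_i(\lambda, z) = E_{e_i}\big[\sum_{n\ge 0} z^{|W_n|_{\mathcal{M}}} \lambda^n\big]$. Let $\mathbf{B}(k; \lambda, z)$ be the $N \times N$ matrix with entries $\mathbf{B}_{i,j}(k; \lambda, z) = (1 - \delta_{i,j})\, z^{|A_{i,j}^{(k)}|_{\mathcal{M}}} R_{i,j}^{(k)}(\lambda)$, and let $\mathbf{K}(\lambda, z)$ be the $2N \times 2N$ block matrix $\begin{pmatrix} \mathbf{0} & \mathbf{B}(1; \lambda, z) \\ \mathbf{B}(-1; \lambda, z) & \mathbf{0} \end{pmatrix}$. *)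

From HB Require Import structures.
From mathcomp Require Import all_boot all_order all_algebra.
From mathcomp Require Import all_classical all_reals all_analysis.
Set Implicit Arguments. Unset Strict Implicit. Unset Printing Implicit Defensive.
Import Order.TTheory GRing.Theory Num.Theory.
Local Open Scope ring_scope.

(* Conventions.
   - Objects of the groupoid G_N are 'I_N.
   - The sign k in {-1,1} is encoded by a bool: true = +1, false = -1.
   - A letter (j, k) : 'I_N * bool appearing in a word from source i stands for
     the generator A_{t,j}^{(k)}, where t is the target of the preceding
     letter (or the source i for the first letter).
   - An arrow with source i is represented by its unique reduced word
     (seq of letters; [::] is the unit e_i).  The Markov chain started at
     e_i only visits arrows with source i. *)

Section Groupoid.
Variable N : nat.
Definition letter := ('I_N * bool)%type.

Definition target (i : 'I_N) (w : seq letter) : 'I_N := last i (map fst w).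

(* right multiplication of the reduced word w (source i) by the generator
   A_{t,a.1}^{(a.2)}, t = target i w (a.1 <> t assumed), returning the
   reduced word of the product, using A^{(k)}_{s,t} A^{(k)}_{t,j} = A^{(k)}_{s,j}
   and A^{(k)}_{s,s} = e_s. *)
Definition step (i : 'I_N) (w : seq letter) (a : letter) : seq letter :=
  match rev w with
  | [::] => [:: a]
  | (t', k') :: rw' =>
      let w' := rev rw' in
      if k' == a.2 then (if a.1 == target i w' then w' else rcons w' a)
      else rcons w a
  end.

Definition walk (i : 'I_N) (cs : seq letter) : seq letter := foldl (step i) [::] cs.

Definition positions (i : 'I_N) (cs : seq letter) : seq (seq letter) :=
  [::] :: scanl (step i) [::] cs.

End Groupoid.

Section Chain.
Variables (R : realType) (N : nat).
Variable p : 'I_N -> 'I_N -> bool -> R.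
Variable len : 'I_N -> 'I_N -> bool -> R.

Fixpoint mlen_from (s : 'I_N) (w : seq (letter N)) : R :=
  match w with
  | [::] => 0
  | (t, k) :: w' => len s t k + mlen_from t w'
  end.

Fixpoint pathw (i : 'I_N) (w : seq (letter N)) (cs : seq (letter N)) : R :=
  match cs with
  | [::] => 1
  | a :: cs' =>
      (if a.1 != target i w then p (target i w) a.1 a.2 else 0)
        * pathw i (step i w a) cs'
  end.

Definition Pn (i : 'I_N) (n : nat) (x : seq (letter N)) : R :=
  \sum_(cs : n.-tuple (letter N) | walk i cs == x) pathw i [::] cs.

Local Open Scope ereal_scope.

Definition Sgf (j : 'I_N) (lam : R) : \bar R :=
  \sum_(n <oo) ((Pn j n [::] * lam ^+ n)%R)%:E.

(* R_{i,j}^{(k)}(lambda) = E_{e_i}[lambda^{T(0, A_{i,j}^{(k)})}]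
   = sum_n P_{e_i}(T = n) lambda^n, T = first n with W_n = A_{i,j}^{(k)} *)
Definition Rgf (i j : 'I_N) (k : bool) (lam : R) : \bar R :=
  \sum_(n <oo)
    ((\sum_(cs : n.-tuple (letter N)
              | index [:: (j, k)] (positions i cs) == n) pathw i [::] cs)
      * lam ^+ n)%R%:E.

Definition Ggf (i : 'I_N) (lam z : R) : \bar R :=
  \sum_(n <oo)
    ((\sum_(cs : n.-tuple (letter N))
        pathw i [::] cs * z `^ (mlen_from i (walk i cs))) * lam ^+ n)%R%:E.

Definition Bmx (k : bool) (lam z : R) (i j : 'I_N) : \bar R :=
  if i != j then (z `^ len i j k)%:E * Rgf i j k lam else 0.

Definition Kmx (lam z : R) (a b : 'I_(N + N)) : \bar R :=
  match fintype.split a, fintype.split b with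
  | inl i, inr j => Bmx true lam z i j
  | inr i, inl j => Bmx false lam z i j
  | _, _ => 0
  end.

Definition sbar (lam : R) (a : 'I_(N + N)) : \bar R :=
  match fintype.split a with inl j | inr j => Sgf j lam end.

Definition vbar (i : 'I_N) (a : 'I_(N + N)) : \bar R :=
  match fintype.split a with inl j | inr j => if i == j then 1 else 0 end.
End Chain.

Local Open Scope ereal_scope.
Fixpoint erowpow (R : realType) (m : nat) (M : 'I_m -> 'I_m -> \bar R)
  (u : 'I_m -> \bar R) (d : nat) : 'I_m -> \bar R :=
  match d with
  | 0 => u
  | d'.+1 => fun b => \sum_(a < m) erowpow M u d' a * M a b
  end.

Definition ebilin (R : realType) (m : nat) (M : 'I_m -> 'I_m -> \bar R)
  (u w : 'I_m -> \bar R) (d : nat) : \bar R :=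
  \sum_(a < m) erowpow M u d a * w a.

(* Grouping the terms of G_i by the position x = W_n gives
   G_i = sum_x z^{|x|} G(e_i, x; lam), with G(e_i, x; lam) = sum_n P_{e_i}(W_n = x) lam^n,
   which vanishes unless x is a reduced word.  A path from e_i to a reduced word
   x = A_{i,j_1}^{(k_1)} x' must visit A_{i,j_1}^{(k_1)}; cutting it at the first such
   visit, the rest of the path is a copy of the chain from e_{j_1} reaching x', so
   G(e_i, x; lam) = R_{i,j_1}^{(k_1)}(lam) G(e_{j_1}, x'; lam) and, iterating,
   G(e_i, x; lam) = R ... R S(e_{j_d}, e_{j_d}; lam).  Reduced words of length d are the
   sign-alternating paths of length d of the 2N-vertex graph of K, whose vertex (k, j)
   records the sign and the target of the last letter, so the words of length d
   contribute vbar(i)^T K^d sbar(lam). *)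

From HB Require Import structures.
From mathcomp Require Import all_boot all_order all_algebra.
From mathcomp Require Import all_classical all_reals all_analysis.
From mathcomp Require Import zify.

Set Implicit Arguments. Unset Strict Implicit. Unset Printing Implicit Defensive.
Import Order.TTheory GRing.Theory Num.Theory.
Local Open Scope ring_scope.

Section ReducedWords.
Variable N : nat.
Notation L := (letter N).
Implicit Types (s : 'I_N) (w x y cs : seq L) (a b c : L).

Definition lastsign w : option bool := if w is c :: w' then Some (last c w').2 else None.

(* [pv] is the sign of the letter preceding [w], [None] at the start of a word. *)
Fixpoint reduced s (pv : option bool) w : bool :=
  if w is c :: w' then [&& c.1 != s, pv != Some c.2 & reduced c.1 (Some c.2) w']
  else true.

Lemma lastsign_rcons w c : lastsign (rcons w c) = Some c.2.
Proof. by case: w => [|d w] //=; rewrite last_rcons. Qed.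

Lemma target_cat s w y : target s (w ++ y) = target (target s w) y.
Proof. by rewrite /target map_cat last_cat. Qed.

Lemma target_rcons s w c : target s (rcons w c) = c.1.
Proof. by rewrite /target map_rcons last_rcons. Qed.

Lemma reducedW s pv w : reduced s pv w -> reduced s None w.
Proof. by case: w => [|c w] //= /and3P[-> _ ->]. Qed.

Lemma reduced_rcons s pv w c :
  reduced s pv (rcons w c) =
  [&& reduced s pv w, c.1 != target s w &
      (if w is [::] then pv else lastsign w) != Some c.2].
Proof.
elim: w s pv => [|d w IH] s pv /=; first by rewrite andbT.
rewrite IH; case: w {IH} => [|e w] /=;
  by case: (d.1 != s); case: (pv != Some d.2); rewrite ?andbT.
Qed.

Lemma step_rcons s w c a :
  step s (rcons w c) a =
  if c.2 == a.2 then (if a.1 == target s w then w else rcons w a)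
  else rcons (rcons w c) a.
Proof. by rewrite /step rev_rcons; case: c => t k /=; rewrite revK. Qed.

Lemma reduced_step s w a :
  reduced s None w -> a.1 != target s w -> reduced s None (step s w a).
Proof.
case/lastP: w => [_ /= -> //|w c].
rewrite reduced_rcons target_rcons => /and3P[Hw Hc Hsign] Ha.
rewrite step_rcons; case: (c.2 =P a.2) => [Hca|Hca].
  case: eqP => // /eqP Hnew.
  by rewrite reduced_rcons Hw Hnew -Hca.
rewrite !reduced_rcons Hw Hc Hsign target_rcons Ha lastsign_rcons.
by case: (w) => [|? ?] /=; apply/eqP => -[/Hca].
Qed.

Lemma size_step s w a : (size (step s w a) <= (size w).+1)%N.
Proof.
case/lastP: w => [|w c] //; rewrite step_rcons !size_rcons.
by case: ifP => _; [case: ifP => _ |]; rewrite ?size_rcons; lia.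
Qed.

Lemma size_foldl_step s w cs : (size (foldl (step s) w cs) <= size w + size cs)%N.
Proof.
elim: cs w => [|a cs IH] w /=; first by rewrite addn0.
by rewrite (leq_trans (IH _)) // addnS -addSn leq_add2r size_step.
Qed.

Lemma ohead_step s w a b :
  ohead w != Some b -> ohead (step s w a) = Some b -> step s w a = [:: b].
Proof.
case/lastP: w => [_ [->] //|w c]; rewrite step_rcons => Hwc.
have Hw : ohead w != Some b by case: (w) Hwc.
case: ifP => _; [case: ifP => _ |].
- by move=> Hb; rewrite Hb eqxx in Hw.
- by case: (w) Hw => [_ [->] //|d w'] /= Hd [Hdb]; rewrite Hdb eqxx in Hd.
- by case: (w) Hwc => [|d w'] /= Hd [Hdb]; rewrite Hdb eqxx in Hd.
Qed.

(* Steps only change the end of a word, so a first letter [b] can only appear through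
   the one-letter word [[:: b]]. *)
Lemma mem_scanl_step_ohead s w cs b :
  ohead w != Some b -> ohead (foldl (step s) w cs) = Some b ->
  [:: b] \in scanl (step s) w cs.
Proof.
elim: cs w => [|a cs IH] w /= Hw Hend; first by rewrite Hend eqxx in Hw.
rewrite in_cons; have [Ha|Ha] := eqVneq (ohead (step s w a)) (Some b).
  by rewrite (ohead_step Hw Ha) eqxx.
by rewrite IH ?orbT.
Qed.

Lemma step_cat s w y a :
  y != [::] -> step s (w ++ y) a = w ++ step (target s w) y a.
Proof.
case/lastP: y => [|y c] // _.
rewrite -rcons_cat !step_rcons target_cat.
by case: ifP => _; [case: ifP => _ |]; rewrite ?rcons_cat.
Qed.

(* The reduced word of [A_b y], for a letter [b] from [s] and a reduced word [y] from [b.1]. *)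
Definition lmul_letter s b y : seq L :=
  if y is c :: y' then
    (if c.2 == b.2 then (if c.1 == s then [::] else [:: c]) else [:: b; c]) ++ y'
  else [:: b].

Lemma target_lmul_letter s b y : target s (lmul_letter s b y) = target b.1 y.
Proof.
case: y => [|c y] //=; rewrite target_cat.
by case: ifP => _; [case: ifP => [/eqP <-|] |].
Qed.

Lemma step_lmul_letter s b y a :
  b.1 != s -> a.1 != target b.1 y ->
  step s (lmul_letter s b y) a = lmul_letter s b (step b.1 y a).
Proof.
case: b => j k; case: a => a1 a2 /= /eqP Hjs.
case: y => [|c [|d y]] Ha.
- by rewrite /lmul_letter /step /= cats0 eq_sym.
- case: c Ha => c1 c2; rewrite /target /= => /eqP Ha.
  rewrite /lmul_letter cats0 (step_rcons j [::] (c1, c2)) /step /rev /target /=.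
  by repeat (case: eqP => /= ?); congruence.
- rewrite /lmul_letter /= step_cat // (step_cat j [:: c]) //.
  by congr (_ ++ _); case: ifP => _; [case: ifP => [/eqP <-|] |].
Qed.

Lemma lmul_letter_eq_cons s b y x :
  reduced b.1 None y -> reduced s None (b :: x) ->
  (lmul_letter s b y == b :: x) = (y == x).
Proof.
case: b => j k; case: y => [|[c1 c2] y] /=; first by rewrite eqseq_cons eqxx.
move=> /andP[Hc1 Hy] /andP[Hj Hx].
case: (c2 =P k) => [Hck|Hck]; last by rewrite /= eqseq_cons eqxx.
subst c2; case: (c1 =P s) => [Hcs|Hcs] /=.
  subst c1; apply/idP/idP => /eqP E;
    [move: Hy; rewrite E | move: Hx; rewrite -E]; by rewrite /= eqxx /= andbF.
apply/idP/idP => /eqP E; first by case: E => E1 _; rewrite E1 eqxx in Hc1.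
by move: Hx; rewrite -E /= eqxx /= andbF.
Qed.

End ReducedWords.

Section BigTuple.
Variables (T : finType) (V : Type) (idx : V) (op : Monoid.com_law idx).

Lemma big_tuple0 (F : seq T -> V) : \big[op/idx]_(t : 0.-tuple T) F t = F [::].
Proof. by rewrite (big_pred1 [tuple]) // => t; rewrite [t]tuple0 /= eqxx. Qed.

Lemma big_tuple_cons n (F : seq T -> V) :
  \big[op/idx]_(t : n.+1.-tuple T) F t =
  \big[op/idx]_(c : T) \big[op/idx]_(t : n.-tuple T) F (c :: t).
Proof.
rewrite pair_big (reindex (fun ct : T * n.-tuple T => [tuple of ct.1 :: ct.2])) /=.
  by apply: eq_bigr => -[c t].
apply: onW_bij; exists (fun t : n.+1.-tuple T => (thead t, [tuple of behead t])).
  by move=> [c t]; congr pair; apply/val_inj.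
by move=> [[|c s] Hs]; apply/val_inj.
Qed.

Lemma big_tuple1 (F : seq T -> V) :
  \big[op/idx]_(t : 1.-tuple T) F t = \big[op/idx]_(c : T) F [:: c].
Proof.
rewrite big_tuple_cons; apply: eq_bigr => c _.
exact: (big_tuple0 (fun t => F (c :: t))).
Qed.

Lemma big_tuple_cat n m k (F : seq T -> V) : n = (m + k)%N ->
  \big[op/idx]_(t : n.-tuple T) F t =
  \big[op/idx]_(x : m.-tuple T) \big[op/idx]_(y : k.-tuple T) F (x ++ y).
Proof.
move=> ->; elim: m F => [|m IH] F.
  by rewrite (big_tuple0 (fun x => \big[op/idx]_(y : k.-tuple T) F (x ++ y))).
rewrite big_tuple_cons (big_tuple_cons _ (fun x => \big[op/idx]_(y : k.-tuple T) F (x ++ y))).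
by apply: eq_bigr => c _; exact: (IH (fun t => F (c :: t))).
Qed.

End BigTuple.

Section FirstPassage.
Variables (R : realType) (N : nat) (p : 'I_N -> 'I_N -> bool -> R).
Notation L := (letter N).
Implicit Types (i s : 'I_N) (w x y cs : seq L) (a b : L).

Lemma pathw_cat i w cs1 cs2 :
  pathw p i w (cs1 ++ cs2) = pathw p i w cs1 * pathw p i (foldl (step i) w cs1) cs2.
Proof. by elim: cs1 w => [|a cs1 IH] w /=; rewrite ?mul1r // IH mulrA. Qed.

Lemma reduced_foldl_step i w cs :
  pathw p i w cs != 0 -> reduced i None w -> reduced i None (foldl (step i) w cs).
Proof.
elim: cs w => [|a cs IH] w //=; case: ifP => Ha; last by rewrite mul0r eqxx.
rewrite mulf_eq0 negb_or => /andP[_ Hcs] Hw.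
exact: IH Hcs (reduced_step Hw Ha).
Qed.

Lemma pathw_lmul_letter i b y cs :
  b.1 != i -> reduced b.1 None y ->
  pathw p i (lmul_letter i b y) cs = pathw p b.1 y cs.
Proof.
move=> Hb; elim: cs y => [|a cs IH] y Hy //=.
rewrite target_lmul_letter; case: ifP => Ha; last by rewrite !mul0r.
by rewrite step_lmul_letter // IH // reduced_step.
Qed.

Lemma foldl_step_lmul_letter i b y cs :
  b.1 != i -> reduced b.1 None y -> pathw p b.1 y cs != 0 ->
  foldl (step i) (lmul_letter i b y) cs = lmul_letter i b (foldl (step b.1) y cs).
Proof.
move=> Hb; elim: cs y => [|a cs IH] y Hy //=; case: ifP => Ha; last by rewrite mul0r eqxx.
rewrite mulf_eq0 negb_or => /andP[_ Hcs].
by rewrite step_lmul_letter // IH // reduced_step.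
Qed.

Lemma size_positions i cs : size (positions i cs) = (size cs).+1.
Proof. by rewrite /= size_scanl. Qed.

Lemma index_positions_cat i b cs1 cs2 :
  (index [:: b] (positions i (cs1 ++ cs2)) == size cs1) =
  (index [:: b] (positions i cs1) == size cs1).
Proof.
rewrite /positions scanl_cat -cat_cons -/(positions i cs1) index_cat.
case: ifP => // Hin; rewrite (memNindex (negbT Hin)) size_positions.
by apply/eqP/eqP; lia.
Qed.

Lemma walk_first_passage i b cs :
  index [:: b] (positions i cs) = size cs -> walk i cs = [:: b].
Proof.
move=> Hidx; have Hin : [:: b] \in positions i cs.
  by rewrite -index_mem Hidx size_positions.
have := nth_index [::] Hin; rewrite Hidx => <-.
rewrite /walk /positions; elim: cs {Hidx Hin} [::] => [|c cs IH] w //=.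
by rewrite IH; apply: set_nth_default; rewrite /= size_scanl.
Qed.

Lemma index_positions_le i b x cs :
  walk i cs = b :: x -> (index [:: b] (positions i cs) <= size cs)%N.
Proof.
move=> Hw; rewrite -ltnS -(size_positions i cs) index_mem in_cons.
by rewrite (@mem_scanl_step_ohead _ i [::] cs b) ?orbT // -/(walk i cs) Hw.
Qed.

(* P_{e_i}(T(0, A_b) = m); [Rgf p i j k lam] is its generating function for [b = (j, k)]. *)
Definition first_passage i b (m : nat) : R :=
  \sum_(cs : m.-tuple L | index [:: b] (positions i cs) == m) pathw p i [::] cs.

Lemma walk_after_first_passage i b x cs1 cs2 :
  reduced i None (b :: x) -> index [:: b] (positions i cs1) = size cs1 ->
  (if walk i (cs1 ++ cs2) == b :: x then pathw p i [::] (cs1 ++ cs2) else 0) =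
  pathw p i [::] cs1 * (if walk b.1 cs2 == x then pathw p b.1 [::] cs2 else 0).
Proof.
move=> Hbx /walk_first_passage Hcs1; have Hbi : b.1 != i by case/andP: Hbx.
rewrite pathw_cat /walk foldl_cat -/(walk i cs1) Hcs1.
rewrite -[[:: b]]/(lmul_letter i b [::]) pathw_lmul_letter //.
have [->|Hnz] := eqVneq (pathw p b.1 [::] cs2) 0; first by rewrite !(mulr0, if_same).
rewrite foldl_step_lmul_letter // lmul_letter_eq_cons ?reduced_foldl_step //.
by case: ifP; rewrite ?mulr0.
Qed.

Lemma Pn_first_passage i b x n :
  reduced i None (b :: x) ->
  Pn p i n (b :: x) = \sum_(m < n.+1) first_passage i b m * Pn p b.1 (n - m) x.
Proof.
move=> Hbx; rewrite /Pn big_mkcond /=.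
pose hit_at (cs : seq L) m := if index [:: b] (positions i cs) == m
  then (if walk i cs == b :: x then pathw p i [::] cs else 0) else 0.
(* Classify the paths by the time [m] of their first visit to [[:: b]]. *)
transitivity (\sum_(cs : n.-tuple L) \sum_(m < n.+1) hit_at cs m).
  apply: eq_bigr => cs _; rewrite /hit_at.
  case: eqP => Hw; last by rewrite big1 // => m _; case: ifP.
  have Hle := index_positions_le Hw; rewrite size_tuple -ltnS in Hle.
  rewrite (bigD1 (Ordinal Hle)) //= eqxx big1 ?addr0 // => m.
  by rewrite -val_eqE /= eq_sym => /negbTE ->.
rewrite exchange_big; apply: eq_bigr => -[m Hm] _ /=.
rewrite (big_tuple_cat _ (hit_at^~ m) (esym (subnKC (Hm : (m <= n)%N)))).
rewrite /first_passage [in RHS]big_mkcond mulr_suml; apply: eq_bigr => cs1 _.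
have Ecat cs2 : (index [:: b] (positions i (cs1 ++ cs2)) == m) =
                (index [:: b] (positions i cs1) == m).
  by have := index_positions_cat i b cs1 cs2; rewrite size_tuple.
under eq_bigr => cs2 _ do rewrite /hit_at Ecat.
case: eqP => [Hidx|_]; last by rewrite mul0r big1.
rewrite /Pn [in RHS]big_mkcond mulr_sumr; apply: eq_bigr => cs2 _.
by rewrite walk_after_first_passage ?size_tuple.
Qed.

Lemma Pn_not_reduced i n x : ~~ reduced i None x -> Pn p i n x = 0.
Proof.
move=> Hx; rewrite /Pn big1 // => cs /eqP Hw.
have [//|Hnz] := eqVneq (pathw p i [::] cs) 0.
have := reduced_foldl_step Hnz (isT : reduced i None [::]).
by rewrite -/(walk i cs) Hw (negbTE Hx).
Qed.

Lemma Pn_size_gt i n x : (n < size x)%N -> Pn p i n x = 0.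
Proof.
move=> Hn; rewrite /Pn big1 // => cs /eqP Hw; exfalso.
by have := size_foldl_step i [::] cs; rewrite -/(walk i cs) Hw add0n size_tuple; lia.
Qed.

End FirstPassage.

Section NonnegSeries.
Variable R : realType.
Local Open Scope ereal_scope.

Lemma nneseriesMr (f : nat -> \bar R) (x : \bar R) :
  (forall n, 0 <= f n) -> 0 <= x ->
  \sum_(n <oo) (f n * x) = (\sum_(n <oo) f n) * x.
Proof.
move=> f0; case: x => [r| |] // x0.
  by under eq_eseriesr do rewrite muleC; rewrite nneseriesZl // muleC.
have [[m fm0]|f_eq0] := pselect (exists m, 0 < f m); last first.
  have {}f_eq0 n : f n = 0.
    by apply/eqP; rewrite eq_le f0 andbT leNgt; apply/negP => ?; apply: f_eq0; exists n.
  by rewrite !eseries0 ?mul0e // => n _ _; rewrite f_eq0 ?mul0e.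
have -> : \sum_(n <oo) (f n * +oo) = +oo.
  apply: (@nneseries_pinfty _ _ xpredT m) => //; last exact: gt0_muley.
  by move=> n _; exact: mule_ge0.
apply/esym/gt0_muley/(lt_le_trans fm0).
apply: le_trans (nneseries_lim_ge m.+1 _) => //.
by rewrite big_nat_recr //= leeDr // sume_ge0.
Qed.

Lemma nneseries_cauchy_prod (a b : nat -> R) :
  (forall n, 0 <= a n)%R -> (forall n, 0 <= b n)%R ->
  \sum_(n <oo) (\sum_(m < n.+1) a m * b (n - m)%N)%R%:E =
  (\sum_(n <oo) (a n)%:E) * (\sum_(n <oo) (b n)%:E).
Proof.
move=> a0 b0.
pose h n m := if (m <= n)%N then (a m * b (n - m)%N)%R%:E else 0.
have h0 n m : 0 <= h n m by rewrite /h; case: ifP; rewrite // lee_fin mulr_ge0.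
have row_sum n : (\sum_(m < n.+1) a m * b (n - m)%N)%R%:E = \sum_(m <oo) h n m.
  rewrite (nneseries_split _ n.+1) // add0n eseries0 ?adde0; last first.
    by move=> m Hm _; rewrite /h leqNgt Hm.
  by rewrite -sumEFin big_mkord; apply: eq_bigr => -[m Hm] _; rewrite /h -ltnS Hm.
under eq_eseriesr do rewrite row_sum.
rewrite nneseries_interchange // -nneseriesMr; last 2 first.
- by move=> n; rewrite lee_fin.
- by apply: nneseries_ge0 => n _ _; rewrite lee_fin.
apply: eq_eseriesr => m _.
rewrite (nneseries_split _ m) // add0n big_mkord big1 ?add0e; last first.
  by move=> -[n Hn] _; rewrite /h leqNgt Hn.
rewrite -nneseries_addn // -nneseriesZl; last by move=> n _; rewrite lee_fin.
by apply: eq_eseriesr => n _; rewrite /h leq_addl addnK EFinM.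
Qed.

End NonnegSeries.

Section GreenFunction.
Variables (R : realType) (N : nat) (p : 'I_N -> 'I_N -> bool -> R).
Hypothesis p_ge0 : forall i j k, i != j -> 0 <= p i j k.
Variable lam : R.
Hypothesis lam_ge0 : 0 <= lam.
Notation L := (letter N).
Implicit Types (i s : 'I_N) (w x cs : seq L).

Lemma pathw_ge0 i w cs : 0 <= pathw p i w cs.
Proof.
elim: cs w => [|a cs IH] w //=.
by rewrite mulr_ge0 //; case: ifP => // ?; apply: p_ge0; rewrite eq_sym.
Qed.

Lemma Pn_ge0 i n x : 0 <= Pn p i n x.
Proof. exact/sumr_ge0/(fun _ _ => pathw_ge0 _ _ _). Qed.

Lemma first_passage_ge0 i b m : 0 <= first_passage p i b m.
Proof. exact/sumr_ge0/(fun _ _ => pathw_ge0 _ _ _). Qed.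

Local Open Scope ereal_scope.

Definition green i x : \bar R := \sum_(n <oo) (Pn p i n x * lam ^+ n)%:E.

Fixpoint Rgf_prod s x : \bar R :=
  if x is (j, k) :: x' then Rgf p s j k lam * Rgf_prod j x' else 1.

Lemma Rgf_ge0 i j k : 0 <= Rgf p i j k lam.
Proof.
apply: nneseries_ge0 => n _ _.
by rewrite lee_fin mulr_ge0 ?exprn_ge0 ?first_passage_ge0.
Qed.

Lemma green_cons i j k x :
  reduced i None ((j, k) :: x) -> green i ((j, k) :: x) = Rgf p i j k lam * green j x.
Proof.
move=> Hr; rewrite /green.
have conv n : (Pn p i n ((j, k) :: x) * lam ^+ n)%:E =
    (\sum_(m < n.+1) (first_passage p i (j, k) m * lam ^+ m) *
                      (Pn p j (n - m) x * lam ^+ (n - m)))%:E.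
  rewrite Pn_first_passage // mulr_suml; congr EFin; apply: eq_bigr => -[m Hm] _ /=.
  by rewrite mulrACA -exprD subnKC.
under eq_eseriesr do rewrite conv.
by rewrite (@nneseries_cauchy_prod _ (fun m => first_passage p i (j, k) m * lam ^+ m)%R
  (fun n => Pn p j n x * lam ^+ n)%R) // => n;
  rewrite mulr_ge0 ?exprn_ge0 ?first_passage_ge0 ?Pn_ge0.
Qed.

Lemma green_reduced i x :
  reduced i None x -> green i x = Rgf_prod i x * Sgf p (target i x) lam.
Proof.
elim: x i => [|[j k] x IH] i Hr /=; first by rewrite mul1e.
rewrite green_cons // IH ?muleA //.
by case/and3P: Hr => _ _ /reducedW.
Qed.

End GreenFunction.

Section TransferMatrix.
Variables (R : realType) (N : nat) (p len : 'I_N -> 'I_N -> bool -> R).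
Hypothesis p_ge0 : forall i j k, i != j -> 0 <= p i j k.
Variables (lam z : R).
Hypothesis lam_ge0 : 0 <= lam.
Variable i : 'I_N.
Notation L := (letter N).
Notation K := (Kmx p len lam z).
Notation B k := (Bmx p len k lam z).
Implicit Types (s t : 'I_N) (x : seq L) (c : L).
Local Open Scope ereal_scope.

(* Row/column [signed_index k t] of [K] stands for the vertex [t] reached by a
   letter of sign [k]: the next letter must have sign [~~ k]. *)
Definition signed_index (k : bool) t : 'I_(N + N) :=
  unsplit (if k then inr t else inl t).

Lemma signed_index_eq k t k' t' :
  (signed_index k t == signed_index k' t') = ((t, k) == (t', k')).
Proof.
apply/eqP/eqP => [|[-> ->] //].
move/(congr1 (@fintype.split N N)); rewrite !unsplitK.
by case: k; case: k' => // -[->].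
Qed.

Lemma Bmx_ge0 k s t : 0 <= B k s t.
Proof.
rewrite /Bmx; case: ifP => // _.
by rewrite mule_ge0 ?Rgf_ge0 // lee_fin powR_ge0.
Qed.

Lemma Bmx_diag k t : B k t t = 0.
Proof. by rewrite /Bmx eqxx. Qed.

Lemma Kmx_signed_index k t b :
  K (signed_index k t) b =
  \sum_(c : L) (if (k != c.2) && (signed_index c.2 c.1 == b) then B c.2 t c.1 else 0).
Proof.
rewrite -(splitK b); set b' := fintype.split b.
have [k' [j ->]] : exists k' j, unsplit b' = signed_index k' j.
  by case: b' => j; [exists false | exists true]; exists j.
transitivity (\sum_(c : L) if c == (j, k') then (if k != k' then B k' t j else 0) else 0).
  by rewrite -big_mkcond big_pred1_eq /Kmx /signed_index !unsplitK; case: k; case: k'.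
apply: eq_bigr => -[c1 c2] _ /=; rewrite signed_index_eq.
by case: eqP => [[-> ->]|_]; rewrite ?andbT ?andbF.
Qed.

Fixpoint Bprod s x : \bar R := if x is (j, k) :: x' then B k s j * Bprod j x' else 1.

Lemma Bprod_ge0 s x : 0 <= Bprod s x.
Proof. by elim: x s => [|[j k] x IH] s //=; rewrite mule_ge0 ?Bmx_ge0. Qed.

Lemma Bprod_rcons s x c : Bprod s (rcons x c) = Bprod s x * B c.2 (target s x) c.1.
Proof.
elim: x s => [|[j k] x IH] s /=; first by case: c => c1 c2; rewrite mule1 mul1e.
by rewrite IH muleA.
Qed.

Definition word_index x := signed_index (odflt false (lastsign x)) (target i x).

Definition word_weight x b : \bar R :=
  if reduced i None x && (word_index x == b) then Bprod i x else 0.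

Lemma word_weight_ge0 x b : 0 <= word_weight x b.
Proof. by rewrite /word_weight; case: ifP; rewrite ?Bprod_ge0. Qed.

Lemma sum_vbar (F : 'I_(N + N) -> \bar R) :
  \sum_a vbar R i a * F a = F (signed_index false i) + F (signed_index true i).
Proof.
have delta (G : 'I_N -> \bar R) : \sum_(a < N) (if i == a then 1 else 0) * G a = G i.
  rewrite (bigD1 i) //= eqxx mul1e big1 ?adde0 // => a.
  by rewrite eq_sym => /negbTE ->; rewrite mul0e.
rewrite big_split_ord /vbar /=.
under eq_bigr do rewrite -[lshift N _]/(unsplit (inl _)) unsplitK.
under [X in _ + X]eq_bigr do rewrite -[rshift N _]/(unsplit (inr _)) unsplitK.
by rewrite !delta.
Qed.

Lemma sum_if_eq_mul (P : bool) (a0 : 'I_(N + N)) (w : \bar R) (F : 'I_(N + N) -> \bar R) :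
  \sum_a (if P && (a0 == a) then w else 0) * F a = if P then w * F a0 else 0.
Proof.
case: P => /=; last by rewrite big1 // => a _; rewrite mul0e.
rewrite (bigD1 a0) //= eqxx big1 ?adde0 // => a.
by rewrite eq_sym => /negbTE ->; rewrite mul0e.
Qed.

Lemma vbar_Kmx b : \sum_a vbar R i a * K a b = \sum_(c : L) word_weight [:: c] b.
Proof.
rewrite sum_vbar !Kmx_signed_index -big_split; apply: eq_bigr => -[j k] _ /=.
rewrite /word_weight /word_index /= andbT mule1.
have [->|Hji] := eqVneq j i; first by rewrite !Bmx_diag !if_same adde0.
by case: k; rewrite /= ?adde0 ?add0e.
Qed.

Lemma word_weight_Kmx x b : x != [::] ->
  \sum_a word_weight x a * K a b = \sum_(c : L) word_weight (rcons x c) b.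
Proof.
move=> Hx; rewrite /word_weight sum_if_eq_mul.
case: ifP => Hr; last first.
  by rewrite big1 // => c _; rewrite reduced_rcons Hr.
rewrite Kmx_signed_index ge0_sume_distrr; last by move=> c _; case: ifP; rewrite ?Bmx_ge0.
apply: eq_bigr => -[j k] _ /=.
rewrite reduced_rcons Hr Bprod_rcons /word_index lastsign_rcons target_rcons /=.
case: (x) Hx => // c0 x0 _.
have [->|Hj] := eqVneq j (target i (c0 :: x0)); first by rewrite Bmx_diag !if_same mule0.
by rewrite /= (inj_eq (@Some_inj _)); case: ifP; rewrite ?mule0.
Qed.

Lemma erowpow_vbar d b :
  erowpow K (vbar R i) d.+1 b = \sum_(x : d.+1.-tuple L) word_weight x b.
Proof.
elim: d b => [|d IH] b.
  by rewrite (big_tuple1 _ (word_weight^~ b)) -vbar_Kmx.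
rewrite (big_tuple_cat _ (word_weight^~ b) (esym (addn1 d.+1))).
have -> : erowpow K (vbar R i) d.+2 b = \sum_a erowpow K (vbar R i) d.+1 a * K a b by [].
under eq_bigr => a _ do
  rewrite IH (ge0_sume_distrl _ _ (fun x : d.+1.-tuple L => fun=> word_weight_ge0 x a)).
rewrite exchange_big; apply: eq_bigr => x _.
rewrite word_weight_Kmx; last by case: x => -[].
by rewrite (big_tuple1 _ (fun y => word_weight (x ++ y) b)); under eq_bigr do rewrite cats1.
Qed.

Lemma ebilin_vbar_sbar d :
  ebilin K (vbar R i) (sbar p lam) d.+1 =
  \sum_(x : d.+1.-tuple L)
     (if reduced i None x then Bprod i x * Sgf p (target i x) lam else 0).
Proof.
rewrite /ebilin; under eq_bigr => a _ do
  rewrite erowpow_vbar (ge0_sume_distrl _ _ (fun x : d.+1.-tuple L => fun=> word_weight_ge0 x a)).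
rewrite exchange_big; apply: eq_bigr => x _.
rewrite /word_weight sum_if_eq_mul /sbar /word_index /signed_index unsplitK.
by case: (odflt _ _).
Qed.

End TransferMatrix.

Lemma powRD_ge0 (R : realType) (x a b : R) :
  0 <= a -> 0 <= b -> x `^ (a + b) = x `^ a * x `^ b.
Proof.
move=> a0 b0; have [ab0|ab_neq0] := eqVneq (a + b) 0; last by rewrite powRD // (negbTE ab_neq0).
have /andP[/eqP -> /eqP ->] : (a == 0) && (b == 0) by rewrite -paddr_eq0 ?ab0.
by rewrite addr0 powRr0 mulr1.
Qed.

Section WordExpansion.
Variables (R : realType) (N : nat) (p len : 'I_N -> 'I_N -> bool -> R).
Hypothesis p_ge0 : forall i j k, i != j -> 0 <= p i j k.
Hypothesis len_ge0 : forall i j k, i != j -> 0 <= len i j k.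
Variables (lam z : R).
Hypothesis lam_ge0 : 0 <= lam.
Variable i : 'I_N.
Notation L := (letter N).
Implicit Types (s : 'I_N) (x : seq L).

Lemma mlen_from_ge0 s x : reduced s None x -> 0 <= mlen_from len s x.
Proof.
elim: x s => [|[j k] x IH] s //= /andP[Hj Hx].
by rewrite addr_ge0 ?len_ge0 1?eq_sym // IH // (reducedW Hx).
Qed.

Lemma sum_pathw_by_length n :
  \sum_(cs : n.-tuple L) pathw p i [::] cs * z `^ mlen_from len i (walk i cs) =
  \sum_(d < n.+1) \sum_(x : d.-tuple L) z `^ mlen_from len i x * Pn p i n x.
Proof.
under [RHS]eq_bigr do under eq_bigr do rewrite /Pn big_mkcond mulr_sumr.
under [RHS]eq_bigr do rewrite exchange_big.
rewrite exchange_big; apply: eq_bigr => cs _.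
have size_w : (size (walk i cs) < n.+1)%N.
  by have := size_foldl_step i [::] cs; rewrite -/(walk i cs) add0n size_tuple ltnS.
rewrite (bigD1 (Ordinal size_w)) //= [X in _ + X]big1 ?addr0; last first.
  move=> d Hd; apply: big1 => x _; case: eqP => [Hx|]; last by rewrite mulr0.
  by move: Hd; rewrite -val_eqE /= Hx size_tuple eqxx.
rewrite (bigD1 (in_tuple (walk i cs))) //= eqxx mulrC big1 ?addr0 // => x.
by rewrite -val_eqE /= eq_sym => /negbTE ->; rewrite mulr0.
Qed.

Local Open Scope ereal_scope.

Lemma powR_mlen_Rgf_prod s x : reduced s None x ->
  (z `^ mlen_from len s x)%:E * Rgf_prod p lam s x = Bprod p len lam z s x.
Proof.
elim: x s => [|[j k] x IH] s /=; first by rewrite powRr0 mul1e.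
move=> /andP[Hj Hx]; have Hx' := reducedW Hx.
rewrite powRD_ge0 ?len_ge0 ?mlen_from_ge0 1?eq_sym // EFinM muleACA IH //.
by rewrite /Bmx eq_sym Hj.
Qed.

Definition word_length_gf (d : nat) : \bar R :=
  \sum_(x : d.-tuple L) (z `^ mlen_from len i x)%:E * green p lam i x.

Lemma word_length_gf_ge0 d : 0 <= word_length_gf d.
Proof.
apply: sume_ge0 => x _; rewrite mule_ge0 ?lee_fin ?powR_ge0 //.
by apply: nneseries_ge0 => n _ _; rewrite lee_fin mulr_ge0 ?exprn_ge0 ?Pn_ge0.
Qed.

Lemma Ggf_word_length : Ggf p len i lam z = \sum_(d <oo) word_length_gf d.
Proof.
pose g n d := \sum_(x : d.-tuple L) (z `^ mlen_from len i x * (Pn p i n x * lam ^+ n))%:E.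
have g_ge0 n d : 0 <= g n d.
  by apply: sume_ge0 => x _; rewrite lee_fin !mulr_ge0 ?powR_ge0 ?exprn_ge0 ?Pn_ge0.
have Ggf_term n : ((\sum_(cs : n.-tuple L) pathw p i [::] cs *
    z `^ mlen_from len i (walk i cs)) * lam ^+ n)%:E = \sum_(d <oo) g n d.
  rewrite sum_pathw_by_length (nneseries_split _ n.+1) // add0n eseries0 ?adde0.
    rewrite big_mkord mulr_suml -sumEFin; apply: eq_bigr => d _.
    by rewrite mulr_suml -sumEFin; apply: eq_bigr => x _; rewrite mulrA.
  move=> d Hd _; apply: big1 => x _.
  by rewrite Pn_size_gt ?size_tuple // mul0r mulr0.
rewrite /Ggf; under eq_eseriesr do rewrite Ggf_term.
rewrite nneseries_interchange //; apply: eq_eseriesr => d _.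
rewrite /g nneseries_sum; last first.
  by move=> x n _; rewrite lee_fin !mulr_ge0 ?powR_ge0 ?exprn_ge0 ?Pn_ge0.
apply: eq_bigr => x _; under eq_eseriesr do rewrite EFinM.
by rewrite nneseriesZl // => n _; rewrite lee_fin mulr_ge0 ?exprn_ge0 ?Pn_ge0.
Qed.

Lemma word_length_gf0 : word_length_gf 0 = Sgf p i lam.
Proof.
rewrite /word_length_gf.
by rewrite (big_tuple0 _ (fun x => (z `^ mlen_from len i x)%:E * green p lam i x)) powRr0 mul1e.
Qed.

Lemma word_length_gfS d :
  word_length_gf d.+1 = ebilin (Kmx p len lam z) (vbar R i) (sbar p lam) d.+1.
Proof.
rewrite ebilin_vbar_sbar //; apply: eq_bigr => x _.
case: ifP => Hx; first by rewrite green_reduced // muleA powR_mlen_Rgf_prod.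
rewrite /green eseries0 ?mule0 // => n _ _.
by rewrite Pn_not_reduced ?Hx // mul0r.
Qed.

End WordExpansion.

Unset Implicit Arguments.

Theorem proposition5p9 (R : realType) (N : nat) (HN : (3 <= N)%N)
  (p : 'I_N -> 'I_N -> bool -> R)
  (Hp : forall (i j : 'I_N) (k : bool), i != j -> 0 < p i j k < 1)
  (Hsum : forall i : 'I_N, \sum_(j < N | j != i) \sum_(k : bool) p i j k = 1)
  (len : 'I_N -> 'I_N -> bool -> R)
  (Hlen : forall (i j : 'I_N) (k : bool), i != j -> 0 <= len i j k)
  (lam z : R) (Hlam : 0 <= lam) (Hz : 0 <= z) (i : 'I_N) :
  Ggf p len i lam z =
    (Sgf p i lam +
     \sum_(1 <= d <oo) ebilin (Kmx p len lam z) (@vbar R N i) (sbar p lam) d)%E.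
Proof.
have p_ge0 i' j k : i' != j -> 0 <= p i' j k by move=> /(Hp _ _ k) /andP[/ltW].
rewrite Ggf_word_length // nneseries_recl //; last first.
  by move=> d _; exact: word_length_gf_ge0.
rewrite word_length_gf0; congr (_ + _)%E.
apply/congr_lim/funext => m; apply: eq_big_nat => -[|d] // _.
exact: word_length_gfS.
Qed.
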